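(* Let $\Pi_n=\{\pi_1,\ldots,\pi_n\}$ be a finite set of policies of a discrete mean-field game (setting in the context) with $J$ $\mu$-diff-affine, and let $M_{ij}=J(\pi_i,\mu^{\pi_j})$. Let $\rho$ be a finitely supported distribution over $\Delta(\Pi_n)$ (writing $\nu_i=\nu(\pi_i)$). (i) If $\sum_i\max_k\sum_\nu\rho(\nu)\,\nu_i\sum_j\nu_j\big(M_{kj}-M_{ij}\big)\le0$, then $\sum_i\max_k\sum_\nu\rho(\nu)\nu_i\big(J(\pi_k,\mu(\nu))-J(\pi_i,\mu(\nu))\big)\le0$; in particular $\rho$ is a mean-field correlated equilibrium when deviations are restricted to $\Pi_n$. (ii) If $\max_k\sum_\nu\rho(\nu)\sum_i\sum_j\nu_i\nu_j\big(M_{kj}-M_{ij}\big)\le0$, then $\max_k\sum_\nu\rho(\nu)\big(J(\pi_k,\mu(\nu))-J(\pi(\nu),\mu(\nu))\big)\le0$, i.e. $\rho$ is a mean-field coarse correlated equilibrium when deviations are restricted to $\Pi_n$.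
   Context: A discrete mean-field game consists of finite state set $\mathcal X$, finite action set $\mathcal A$, reward $r:\mathcal X\times\mathcal A\times\Delta(\mathcal X)\to\mathbb R$, transitions $p(x'\mid x,a)$ independent of the population distribution, initial distribution $\mu_0$. A policy is $\pi:\mathcal X\to\Delta(\mathcal A)$; $\mu^\pi$ is its state occupancy measure; $J(\pi,\mu)=\sum_{x,a}\mu^\pi(x)\pi(x,a)r(x,a,\mu)$. For $\nu\in\Delta(\Pi_n)$, $\mu(\nu)=\sum_j\nu(\pi_j)\mu^{\pi_j}$ and $J(\pi(\nu),\mu)=\sum_i\nu(\pi_i)J(\pi_i,\mu)$, where $\pi(\nu)$ samples a policy from $\nu$ at the start and plays it. $J$ is $\mu$-diff-affine if for all policies $\pi,\pi'$ the map $\mu\mapsto J(\pi,\mu)-J(\pi',\mu)$ is affine. A mean-field correlated equilibrium (deviations in $\Pi_n$) is a $\rho$ with $\sum_\nu\rho(\nu)\nu(\pi_i)(J(\pi_k,\mu(\nu))-J(\pi_i,\mu(\nu)))\le0$ for all $i,k$. *)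

From HB Require Import structures.
From mathcomp Require Import all_boot all_order all_algebra.
Set Implicit Arguments. Unset Strict Implicit. Unset Printing Implicit Defensive.
Import Order.TTheory GRing.Theory Num.Theory.
Local Open Scope ring_scope.

Definition is_dist (R : numDomainType) (T : finType) (f : T -> R) : Prop :=
  (forall t, 0 <= f t) /\ \sum_t f t = 1.

Section MFG.
Variables (R : realFieldType) (X A : finType).
(* transition kernel p(x' | x, a) : p x a x' *)
Variable p : X -> A -> X -> R.
Variable mu0 : {ffun X -> R}.
Variable gamma : R.
Variable r : X -> A -> {ffun X -> R} -> R.

Definition is_policy (pi : X -> A -> R) : Prop := forall x, is_dist (pi x).
Definition is_kernel : Prop := forall x a, is_dist (p x a).

Definition Pmat (pi : X -> A -> R) : 'M[R]_#|X| :=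
  \matrix_(i, j) \sum_a pi (enum_val i) a * p (enum_val i) a (enum_val j).

(* discounted state occupancy measure:
   mu^pi = (1 - gamma) sum_t gamma^t mu0 P_pi^t = (1-gamma) mu0 (I - gamma P_pi)^-1 *)
Definition occupancy (pi : X -> A -> R) : {ffun X -> R} :=
  let m0 : 'rV[R]_#|X| := \row_j mu0 (enum_val j) in
  let occ := (1 - gamma) *: (m0 *m invmx (1%:M - gamma *: Pmat pi)) in
  [ffun x => occ 0 (enum_rank x)].

Definition J (pi : X -> A -> R) (mu : {ffun X -> R}) : R :=
  \sum_x \sum_a occupancy pi x * pi x a * r x a mu.

Definition mu_diff_affine : Prop :=
  forall pi pi' : X -> A -> R, is_policy pi -> is_policy pi' ->
  forall (mu1 mu2 : {ffun X -> R}) (t : R),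
    is_dist mu1 -> is_dist mu2 -> 0 <= t <= 1 ->
    J pi [ffun x => t * mu1 x + (1 - t) * mu2 x]
      - J pi' [ffun x => t * mu1 x + (1 - t) * mu2 x]
    = t * (J pi mu1 - J pi' mu1) + (1 - t) * (J pi mu2 - J pi' mu2).

Definition mu_of (n : nat) (pis : 'I_n -> X -> A -> R) (nu : 'I_n -> R)
  : {ffun X -> R} :=
  [ffun x => \sum_j nu j * occupancy (pis j) x].

(* J(pi(nu), mu) = sum_i nu(pi_i) J(pi_i, mu) *)
Definition J_mix (n : nat) (pis : 'I_n -> X -> A -> R) (nu : 'I_n -> R)
  (mu : {ffun X -> R}) : R :=
  \sum_i nu i * J (pis i) mu.

End MFG.

Definition maxI (R : realDomainType) (n : nat) (F : 'I_n.+1 -> R) : R :=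
  \big[Num.max/F ord0]_(k < n.+1) F k.

(* The gain J(pi_k, mu) - J(pi_i, mu) of a deviation is affine in mu on
   distributions, and mu(nu) is the nu-mixture of the occupancy measures
   mu^{pi_j}, which are distributions because (I - gamma P_pi)^-1 is entrywise
   nonnegative with row sums 1/(1 - gamma) (a discrete minimum principle).
   Hence every gain at mu(nu) equals sum_j nu_j (M_kj - M_ij), and the
   hypothesis of each part is its first conclusion rewritten in terms of M.
   For the correlated equilibrium inequalities, each max in (i) is nonnegative (take k = i), so their
   nonpositive sum forces every term to be nonpositive. *)

From mathcomp Require Import all_boot all_order all_algebra.
Import Order.TTheory GRing.Theory Num.Theory.
Set Implicit Arguments. Unset Strict Implicit. Unset Printing Implicit Defensive.
Local Open Scope ring_scope.

Section DiscountedStochastic.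
Variables (R : realFieldType) (N : nat) (P : 'M[R]_N) (gamma : R).
Hypotheses (P_stochastic : forall i, is_dist (P i)) (gamma01 : 0 <= gamma < 1).

Local Notation B := (1%:M - gamma *: P).

Lemma stochastic_mulmx_ge m (Y : 'M[R]_(N, m)) c i j :
  (forall k, c <= Y k j) -> c <= (P *m Y) i j.
Proof.
case: (P_stochastic i) => P_ge0 P_sum1 cY.
rewrite mxE -[c]mul1r -P_sum1 mulr_suml.
by apply: ler_sum => k _; apply: ler_wpM2l.
Qed.

Lemma discounted_mx_min_principle m (Y : 'M[R]_(N, m)) :
  (forall i j, 0 <= (B *m Y) i j) -> forall i j, 0 <= Y i j.
Proof.
move=> BY_ge0 i j; case/andP: gamma01 => gamma_ge0 gamma_lt1.
have [i0 _ Y_min] := @real_arg_minP R _ i predT (Y^~ j) isT (fun k _ => num_real _).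
apply: le_trans _ (Y_min i isT); set y0 := Y i0 j.
have gammaPY_le : gamma * (P *m Y) i0 j <= y0.
  by have := BY_ge0 i0 j; rewrite mulmxBl mul1mx -scalemxAl !mxE subr_ge0.
have gamma_y0 : gamma * y0 <= y0.
  by apply: le_trans gammaPY_le; apply/ler_wpM2l/stochastic_mulmx_ge => // k; apply: Y_min.
by rewrite -(pmulr_rge0 _ (_ : 0 < 1 - gamma)) ?subr_gt0 // mulrBl mul1r subr_ge0.
Qed.

Lemma discounted_mx_unit : B \in unitmx.
Proof.
rewrite -unitmx_tr unitmxE unitfE; apply/negP => /det0P[v /eqP v_neq0 vB0].
have Bv0 : B *m v^T = 0 by rewrite -[B]trmxK -trmx_mul vB0 trmx0.
have vT_ge0 i j : 0 <= v^T i j.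
  by apply: discounted_mx_min_principle => {}i {}j; rewrite Bv0 mxE.
have vT_le0 i j : 0 <= (- v^T) i j.
  by apply: discounted_mx_min_principle => {}i {}j; rewrite mulmxN Bv0 oppr0 mxE.
apply: v_neq0; apply/matrixP => a k; rewrite ord1 [RHS]mxE; apply/eqP; rewrite eq_le.
by have := vT_ge0 k 0; have := vT_le0 k 0; rewrite !mxE oppr_ge0 => -> ->.
Qed.

Lemma invmx_discounted_ge0 i j : 0 <= invmx B i j.
Proof.
apply: discounted_mx_min_principle => {}i {}j.
by rewrite mulmxV ?discounted_mx_unit // mxE ler0n.
Qed.

Lemma invmx_discounted_const :
  (1 - gamma) *: (invmx B *m const_mx 1) = const_mx 1 :> 'cV[R]_N.
Proof.
have P1 : P *m const_mx 1 = const_mx 1 :> 'cV[R]_N.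
  apply/matrixP => i j; case: (P_stochastic i) => _ P_sum1.
  by rewrite !mxE -[RHS]P_sum1; apply: eq_bigr => k _; rewrite mxE mulr1.
have B1 : B *m const_mx 1 = (1 - gamma) *: const_mx 1 :> 'cV[R]_N.
  by rewrite mulmxBl mul1mx -scalemxAl P1 scalerBl scale1r.
by rewrite scalemxAr -B1 mulKmx // discounted_mx_unit.
Qed.

End DiscountedStochastic.

Section Occupancy.
Variables (R : realFieldType) (X A : finType) (p : X -> A -> X -> R).
Variables (mu0 : {ffun X -> R}) (gamma : R).
Hypotheses (p_kernel : is_kernel p) (mu0_dist : is_dist mu0).
Hypothesis gamma01 : 0 <= gamma < 1.

Lemma Pmat_stochastic pi : is_policy pi -> forall i, is_dist (Pmat p pi i).
Proof.
move=> pi_policy i; set x := enum_val i.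
have [pi_ge0 pi_sum1] := pi_policy x.
split=> [k | ]; rewrite ?mxE.
  by apply: sumr_ge0 => a _; apply: mulr_ge0 => //; case: (p_kernel x a).
under eq_bigr => k _ do rewrite mxE.
rewrite exchange_big -pi_sum1; apply: eq_bigr => a _.
have [_ p_sum1] := p_kernel x a.
by rewrite -mulr_sumr -big_enum_val p_sum1 mulr1.
Qed.

Lemma occupancy_dist pi : is_policy pi -> is_dist (occupancy p mu0 gamma pi).
Proof.
move=> pi_policy; have P_stochastic := Pmat_stochastic pi_policy.
have [mu0_ge0 mu0_sum1] := mu0_dist.
set m0 : 'rV[R]_#|X| := \row_j mu0 (enum_val j).
have sum_row (u : 'rV[R]_#|X|) :
    \sum_x u 0 (enum_rank x) = (u *m (const_mx 1 : 'cV_#|X|)) 0 0.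
  rewrite mxE (big_enum_val (fun x => u 0 (enum_rank x))) /=.
  by apply: eq_bigr => j _; rewrite enum_valK mxE mulr1.
have gamma1_ge0 : 0 <= 1 - gamma by case/andP: gamma01; rewrite subr_ge0 => _ /ltW.
split=> [x | ].
  rewrite ffunE !mxE; apply: mulr_ge0 => //; apply: sumr_ge0 => j _; rewrite mxE; apply: mulr_ge0 => //.
  exact: invmx_discounted_ge0.
under eq_bigr => x _ do rewrite ffunE.
rewrite sum_row -scalemxAl -mulmxA scalemxAr invmx_discounted_const //.
rewrite -(sum_row m0) -mu0_sum1; apply: eq_bigr => x _.
by rewrite mxE enum_rankK.
Qed.

End Occupancy.

Lemma dist_split_last (R : realFieldType) N (c : 'I_N.+2 -> R) : is_dist c ->
  exists2 c' : 'I_N.+1 -> R, is_dist c' &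
    forall i, c (widen_ord (leqnSn _) i) = (1 - c ord_max) * c' i.
Proof.
move=> [c_ge0 c_sum1].
have t_sum : 1 - c ord_max = \sum_i c (widen_ord (leqnSn _) i).
  by rewrite -c_sum1 big_ord_recr /= addrK.
have [t0 | t_neq0] := eqVneq (1 - c ord_max) 0.
  exists (fun i => (i == ord0)%:R).
    split=> [i | ]; first exact: ler0n.
    by rewrite (bigD1 ord0) //= big1 ?addr0 // => i /negbTE ->.
  move=> i; rewrite t0 mul0r.
  by apply: (psumr_eq0P (P := predT) (F := fun j => c (widen_ord _ j))); rewrite -?t_sum.
exists (fun i => c (widen_ord (leqnSn _) i) / (1 - c ord_max)); last first.
  by move=> i; rewrite mulrCA divff // mulr1.
split=> [i | ]; first by rewrite divr_ge0 // t_sum sumr_ge0.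
by rewrite -mulr_suml -t_sum divff.
Qed.

Section Mixture.
Variables (R : realFieldType) (X : finType).

Definition mixture (I : finType) (c : I -> R) (mus : I -> {ffun X -> R}) :
  {ffun X -> R} := [ffun x => \sum_i c i * mus i x].

Lemma mixture_dist (I : finType) (c : I -> R) (mus : I -> {ffun X -> R}) :
  is_dist c -> (forall i, is_dist (mus i)) -> is_dist (mixture c mus).
Proof.
move=> [c_ge0 c_sum1] mus_dist; split=> [x | ].
  rewrite ffunE; apply: sumr_ge0 => i _; apply: mulr_ge0 => //.
  by case: (mus_dist i).
under eq_bigr => x _ do rewrite ffunE.
rewrite exchange_big -c_sum1; apply: eq_bigr => i _.
by rewrite -mulr_sumr; case: (mus_dist i) => _ ->; rewrite mulr1.
Qed.

Variable f : {ffun X -> R} -> R.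
Hypothesis f_affine : forall (mu1 mu2 : {ffun X -> R}) (t : R),
  is_dist mu1 -> is_dist mu2 -> 0 <= t <= 1 ->
  f [ffun x => t * mu1 x + (1 - t) * mu2 x] = t * f mu1 + (1 - t) * f mu2.

Lemma affine_mixture N (c : 'I_N.+1 -> R) (mus : 'I_N.+1 -> {ffun X -> R}) :
  is_dist c -> (forall i, is_dist (mus i)) ->
  f (mixture c mus) = \sum_i c i * f (mus i).
Proof.
elim: N => [|N IH] in c mus * => c_dist mus_dist.
  have [_] := c_dist; rewrite big_ord1 => c1.
  rewrite big_ord1 c1 mul1r; congr f; apply/ffunP => x.
  by rewrite ffunE big_ord1 c1 mul1r.
have [c' c'_dist c_widen] := dist_split_last c_dist.
pose t := 1 - c ord_max.
have t01 : 0 <= t <= 1.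
  have [c_ge0 c_sum1] := c_dist.
  rewrite subr_ge0 lerBlDr lerDl c_ge0 andbT -c_sum1.
  by rewrite (bigD1 ord_max) //= lerDl sumr_ge0.
pose mus' i := mus (widen_ord (leqnSn _) i).
have -> : mixture c mus = [ffun x => t * mixture c' mus' x + (1 - t) * mus ord_max x].
  apply/ffunP => x; rewrite !ffunE big_ord_recr /= mulr_sumr subKr.
  by congr (_ + _); apply: eq_bigr => i _; rewrite c_widen mulrA.
have mus'_dist i : is_dist (mus' i) by exact: mus_dist.
have mix'_dist := mixture_dist c'_dist mus'_dist.
rewrite f_affine // IH // [RHS]big_ord_recr /= mulr_sumr subKr.
by congr (_ + _); apply: eq_bigr => i _; rewrite c_widen mulrA.
Qed.

End Mixture.

Section DeviationGain.
Variables (R : realFieldType) (X A : finType) (p : X -> A -> X -> R).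
Variables (mu0 : {ffun X -> R}) (gamma : R) (r : X -> A -> {ffun X -> R} -> R).
Hypotheses (p_kernel : is_kernel p) (mu0_dist : is_dist mu0).
Hypotheses (gamma01 : 0 <= gamma < 1) (J_affine : mu_diff_affine p mu0 gamma r).
Variables (n : nat) (pis : 'I_n.+1 -> X -> A -> R).
Hypothesis pis_policy : forall i, is_policy (pis i).

Local Notation J := (J p mu0 gamma r).
Local Notation occ := (occupancy p mu0 gamma).

Lemma J_sub_mu_of nu k i : is_dist nu ->
  J (pis k) (mu_of p mu0 gamma pis nu) - J (pis i) (mu_of p mu0 gamma pis nu) =
  \sum_j nu j * (J (pis k) (occ (pis j)) - J (pis i) (occ (pis j))).
Proof.
move=> nu_dist.
apply: (affine_mixture (f := fun mu => J (pis k) mu - J (pis i) mu)) => // [|j].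
  exact: J_affine (pis_policy k) (pis_policy i).
exact: (occupancy_dist p_kernel mu0_dist gamma01 (pis_policy j)).
Qed.

Lemma J_sub_J_mix nu k mu : is_dist nu ->
  J (pis k) mu - J_mix p mu0 gamma r pis nu mu = \sum_i nu i * (J (pis k) mu - J (pis i) mu).
Proof.
case=> _ nu_sum1; rewrite /J_mix -[in LHS](mul1r (J _ mu)) -nu_sum1 mulr_suml -sumrB.
by apply: eq_bigr => i _; rewrite mulrBr.
Qed.

End DeviationGain.

Section MaxI.
Variables (R : realDomainType) (n : nat).

Lemma le_maxI (F : 'I_n.+1 -> R) k : F k <= maxI F.
Proof. by rewrite /maxI (bigD1 k) //= le_max lexx. Qed.

Lemma eq_maxI (F G : 'I_n.+1 -> R) : F =1 G -> maxI F = maxI G.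
Proof. by move=> FG; rewrite /maxI FG; apply: eq_bigr. Qed.

Lemma sum_maxI_le0 (G : 'I_n.+1 -> 'I_n.+1 -> R) :
  (forall i, G i i = 0) -> \sum_i maxI (G i) <= 0 -> forall i k, G i k <= 0.
Proof.
move=> G_diag sum_le0 i k.
have maxI_ge0 j : 0 <= maxI (G j) by rewrite -(G_diag j) le_maxI.
apply: le_trans (le_maxI _ k) (le_trans _ sum_le0).
by rewrite (bigD1 i) //= lerDl sumr_ge0.
Qed.

End MaxI.

Theorem mainTheorem10 (R : realFieldType) (X A : finType)
  (p : X -> A -> X -> R) (mu0 : {ffun X -> R}) (gamma : R)
  (r : X -> A -> {ffun X -> R} -> R)
  (n : nat) (pis : 'I_n.+1 -> X -> A -> R)
  (m : nat) (w : 'I_m -> R) (nus : 'I_m -> 'I_n.+1 -> R) :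
  is_kernel p -> is_dist mu0 -> 0 <= gamma < 1 ->
  (forall i, is_policy (pis i)) ->
  mu_diff_affine p mu0 gamma r ->
  is_dist w -> (forall l, is_dist (nus l)) ->
  let M i j := J p mu0 gamma r (pis i) (occupancy p mu0 gamma (pis j)) in
  let muv l := mu_of p mu0 gamma pis (nus l) in
  (* (i) *)
  ((\sum_i maxI (fun k => \sum_l w l * nus l i *
        \sum_j nus l j * (M k j - M i j)) <= 0) ->
     (\sum_i maxI (fun k => \sum_l w l * nus l i *
        (J p mu0 gamma r (pis k) (muv l) - J p mu0 gamma r (pis i) (muv l))) <= 0)
     /\ (forall i k, \sum_l w l * nus l i *
        (J p mu0 gamma r (pis k) (muv l) - J p mu0 gamma r (pis i) (muv l)) <= 0))
  /\
  (* (ii) *)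
  ((maxI (fun k => \sum_l w l * \sum_i \sum_j nus l i * nus l j * (M k j - M i j)) <= 0) ->
     maxI (fun k => \sum_l w l *
        (J p mu0 gamma r (pis k) (muv l) - J_mix p mu0 gamma r pis (nus l) (muv l))) <= 0).
Proof.
move=> p_kernel mu0_dist gamma01 pis_policy J_affine _ nus_dist M muv.
have gain l k i : J p mu0 gamma r (pis k) (muv l) - J p mu0 gamma r (pis i) (muv l) =
    \sum_j nus l j * (M k j - M i j) by exact: J_sub_mu_of.
split=> [sumM_le0 | maxM_le0].
  have sumJ_le0 : \sum_i maxI (fun k => \sum_l w l * nus l i *
      (J p mu0 gamma r (pis k) (muv l) - J p mu0 gamma r (pis i) (muv l))) <= 0.
    by under eq_bigr => i _ do under eq_maxI => k do under eq_bigr => l _ do rewrite gain.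
  split=> //; apply: sum_maxI_le0 sumJ_le0 => i.
  by apply: big1 => l _; rewrite subrr mulr0.
apply: le_trans maxM_le0; rewrite le_eqVlt; apply/orP/or_introl/eqP/eq_maxI => k.
apply: eq_bigr => l _; rewrite J_sub_J_mix //; congr (_ * _).
by apply: eq_bigr => i _; rewrite gain mulr_sumr; apply: eq_bigr => j _; rewrite mulrA.
Qed.
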